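(* Let $I$ be a countable index set with nested finite subsets $I_1\subset I_2\subset\cdots$, $\bigcup_nI_n=I$, let $W$ be a compact Hausdorff space, $m:X^{\mathbb{R}}\to C^*(W)$ a sequence measure function, and $p\in\mathbb{N}^*$ a free ultrafilter. Then there exists $w_p\in W$ such that $\mu(\mathbf{x})(p)=m(\mathbf{x})(w_p)$ for all $\mathbf{x}\in X^{\mathbb{R}}$.
   Context: A nonnegative real sequence $\mathbf{x}$ is frame compatible if $0\le x_1\le|I_1|$ and $0\le x_i-x_{i-1}\le|I_i\setminus I_{i-1}|$ for $i\ge 2$; $X$ is the set of these, $X^+=\{c\mathbf{x}:\mathbf{x}\in X,c\ge0\}$, $X^{\mathbb{R}}=\{\mathbf{x}^1-\mathbf{x}^2:\mathbf{x}^j\in X^+\}$. $\mathbf{x}\approx\mathbf{y}$ iff $\lim_n(x_n-y_n)/|I_n|=0$; for nonnegative sequences $\mathbf{y}\leqq\mathbf{x}$ iff $\liminf_n(x_n-y_n)/|I_n|\ge0$. $C^*(W)$: real continuous functions on $W$. A sequence measure function is a linear $m:X^{\mathbb{R}}\to C^*(W)$ with: $m(\mathbf{x})=m(\mathbf{y})$ iff $\mathbf{x}\approx\mathbf{y}$ for $\mathbf{x},\mathbf{y}\in X^{\mathbb{R}}$; $m(\mathbf{x})\le m(\mathbf{y})$ pointwise iff $\mathbf{x}\leqq\mathbf{y}$ for $\mathbf{x},\mathbf{y}\in X^+$; $m(\mathbf{i})=1$ where $\mathbf{i}=(|I_1|,|I_2|,\dots)$. $\mathbb{N}^*$ is the set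 of free ultrafilters on $\mathbb{N}$; for a bounded sequence $\mathbf{y}$, $p\text{-}\lim\mathbf{y}=c$ iff for every $\varepsilon>0$, $\{n:|y_n-c|<\varepsilon\}\in p$. The ultrafilter sequence measure function is $\mu(\mathbf{x})(p)=p\text{-}\lim_n x_n/|I_n|$ for $\mathbf{x}\in X^{\mathbb{R}}$. *)

From HB Require Import structures.
From mathcomp Require Import all_boot all_order all_algebra.
From mathcomp Require Import finmap.
From mathcomp Require Import all_classical all_reals all_analysis.
Set Implicit Arguments. Unset Strict Implicit. Unset Printing Implicit Defensive.
Import Order.TTheory GRing.Theory Num.Theory.
Import numFieldNormedType.Exports.
Local Open Scope classical_set_scope.
Local Open Scope ring_scope.

(* Sequences are indexed from 0: x 0 corresponds to x_1 of the paper,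
   and I 0 to I_1. *)

Section Defs.
Variables (R : realType) (T : choiceType) (I : nat -> {fset T}).

Definition card_I (n : nat) : R := (#|` I n|)%:R.

Definition card_Idiff (n : nat) : R := (#|` (I n.+1 `\` I n)%fset|)%:R.

Definition iseq : nat -> R := card_I.

Definition frame_compatible (x : nat -> R) : Prop :=
  (0 <= x 0 <= card_I 0) /\
  (forall n, 0 <= x n.+1 - x n <= card_Idiff n).

Definition Xplus (x : nat -> R) : Prop :=
  exists (c : R) (y : nat -> R), 0 <= c /\ frame_compatible y /\ x = (fun n => c * y n).

Definition XR (x : nat -> R) : Prop :=
  exists x1 x2, Xplus x1 /\ Xplus x2 /\ x = (fun n => x1 n - x2 n).

Definition seq_approx (x y : nat -> R) : Prop :=
  (fun n => (x n - y n) / card_I n) @ \oo --> (0 : R).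

Definition seq_le (y x : nat -> R) : Prop :=
  (0 <= limn_einf (fun n => ((x n - y n) / card_I n)%:E))%E.

(* sequence measure function m : X^R -> C*(W) (values outside X^R irrelevant) *)
Definition sequence_measure_function (W : topologicalType)
  (m : (nat -> R) -> W -> R) : Prop :=
  (forall x, XR x -> continuous (m x)) /\
  (forall x y (a b : R), XR x -> XR y ->
      m (fun n => a * x n + b * y n) = (fun w => a * m x w + b * m y w)) /\
  (forall x y, XR x -> XR y -> (m x = m y <-> seq_approx x y)) /\
  (forall x y, Xplus x -> Xplus y -> ((forall w, m x w <= m y w) <-> seq_le x y)) /\
  (m iseq = fun _ => 1).

End Defs.

Definition free_ultrafilter (p : set_system nat) : Prop :=
  UltraFilter p /\ (forall n : nat, exists A, p A /\ ~ A n).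

Definition plim (R : realType) (p : set_system nat) (y : nat -> R) (c : R) : Prop :=
  forall eps : R, 0 < eps -> p [set n | `|y n - c| < eps].

From HB Require Import structures.
From mathcomp Require Import all_boot all_order all_algebra.
From mathcomp Require Import finmap.
From mathcomp Require Import all_classical all_reals all_analysis.
From mathcomp Require Import ring lra.
Import Order.TTheory GRing.Theory Num.Theory.
Import numFieldNormedType.Exports.
Set Implicit Arguments.
Unset Strict Implicit.

Local Open Scope classical_set_scope.
Local Open Scope ring_scope.

(* Let [c x] be the p-limit of [x_n / |I_n|], which exists because these ratios
   are bounded for [x] in X^R.  The sets [{w | m x w = c x}] are closed, so by
   compactness of [W] it suffices that finitely many of them meet.  Given
   [x_1, ..., x_k], the sequence [g = sum_j |x_j - c x_j * i|] lies in X^R and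
   [g_n / |I_n|] tends to [0] along [p].  If [m g >= d > 0] on [W], the order
   axiom would give [d * i <= g], which fails along the infinitely many [n] of
   a set in [p]; hence the minimum of [m g] on [W] is [0], and at a minimizer
   [w] we get [|m x_j w - c x_j| <= m |x_j - c x_j * i| w <= m g w = 0]. *)

Section FrameCompatible.
Variables (R : realType) (T : choiceType) (I : nat -> {fset T}).
Hypothesis Inest : forall n, (I n `<=` I n.+1)%fset.
Implicit Types (x y u z : nat -> R).

Local Notation card_I := (card_I R I).
Local Notation card_Idiff := (card_Idiff R I).
Local Notation iseq := (iseq R I).

Lemma card_IS n : card_I n.+1 = card_I n + card_Idiff n.
Proof.
rewrite /card_I /card_Idiff (cardfsDS (Inest n)) natrB ?fsubset_leq_card //.
by rewrite addrC subrK.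
Qed.

Lemma card_I_ge0 n : 0 <= card_I n.
Proof. exact: ler0n. Qed.

Lemma card_Idiff_ge0 n : 0 <= card_Idiff n.
Proof. exact: ler0n. Qed.

Lemma frame_compatible_bound y :
  frame_compatible I y -> forall n, 0 <= y n <= card_I n.
Proof.
move=> [y0 yS]; elim=> [//|n /andP[IH1 IH2]].
by have /andP[? ?] := yS n; rewrite card_IS; apply/andP; split; lra.
Qed.

Lemma frame_compatible_iseq : frame_compatible I iseq.
Proof.
split=> [|n]; first by rewrite lexx card_I_ge0.
by rewrite /iseq card_IS addrC addKr lexx card_Idiff_ge0.
Qed.

Lemma frame_compatible_scale y t :
  0 <= t <= 1 -> frame_compatible I y -> frame_compatible I (fun n => t * y n).
Proof.
move=> /andP[t0 t1] [/andP[y0 y1] yS]; split; first by apply/andP; split; nra.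
by move=> n; have /andP[? ?] := yS n; apply/andP; split; nra.
Qed.

Lemma frame_compatible_midpoint y u :
  frame_compatible I y -> frame_compatible I u ->
  frame_compatible I (fun n => (y n + u n) / 2).
Proof.
move=> [/andP[y0 y1] yS] [/andP[u0 u1] uS]; split; first by apply/andP; split; lra.
by move=> n; have /andP[? ?] := yS n; have /andP[? ?] := uS n; apply/andP; split; lra.
Qed.

Lemma frame_compatible_max y u :
  frame_compatible I y -> frame_compatible I u ->
  frame_compatible I (fun n => Num.max (y n) (u n)).
Proof.
move=> [/andP[y0 y1] yS] [/andP[u0 u1] uS]; split.
  by case: (leP (y 0) (u 0)) => _; apply/andP.
move=> n; have /andP[? ?] := yS n; have /andP[? ?] := uS n.
by case: (leP (y n) (u n)); case: (leP (y n.+1) (u n.+1)) => *; apply/andP; split; lra.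
Qed.

Lemma Xplus_frame_compatible y : frame_compatible I y -> Xplus I y.
Proof. by exists 1, y; split=> //; split=> //; apply/funext => n; rewrite mul1r. Qed.

Lemma Xplus_common_scale x z : Xplus I x -> Xplus I z ->
  exists C y u, [/\ 0 <= C, frame_compatible I y, frame_compatible I u,
    x = (fun n => C * y n) & z = (fun n => C * u n)].
Proof.
move=> [c [y [c0 [hy ->]]]] [d [u [d0 [hu ->]]]].
have [cd0|cd_neq0] := eqVneq (c + d) 0.
  have [-> ->] : c = 0 /\ d = 0 by split; lra.
  by exists 0, y, u.
have cd_gt0 : 0 < c + d by rewrite lt_def cd_neq0 addr_ge0.
exists (c + d), (fun n => c / (c + d) * y n), (fun n => d / (c + d) * u n).
split; first exact: ltW.
- apply: frame_compatible_scale hy.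
  by rewrite divr_ge0 ?(ltW cd_gt0) //= ler_pdivrMr // mul1r lerDl.
- apply: frame_compatible_scale hu.
  by rewrite divr_ge0 ?(ltW cd_gt0) //= ler_pdivrMr // mul1r lerDr.
- by apply/funext => n; rewrite mulrA mulrCA divff ?mulr1 // gt_eqF.
- by apply/funext => n; rewrite mulrA mulrCA divff ?mulr1 // gt_eqF.
Qed.

Lemma Xplus_scale x a : 0 <= a -> Xplus I x -> Xplus I (fun n => a * x n).
Proof.
move=> a0 [c [y [c0 [hy ->]]]]; exists (a * c), y; split; first exact: mulr_ge0.
by split=> //; apply/funext => n; rewrite mulrA.
Qed.

Lemma Xplus_add x z : Xplus I x -> Xplus I z -> Xplus I (fun n => x n + z n).
Proof.
move=> hx hz; have [C [y [u [C0 hy hu -> ->]]]] := Xplus_common_scale hx hz.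
exists (2 * C), (fun n => (y n + u n) / 2); split; first by rewrite mulr_ge0.
split; first exact: frame_compatible_midpoint.
by apply/funext => n; field.
Qed.

Lemma Xplus_max x z : Xplus I x -> Xplus I z ->
  Xplus I (fun n => Num.max (x n) (z n)).
Proof.
move=> hx hz; have [C [y [u [C0 hy hu -> ->]]]] := Xplus_common_scale hx hz.
exists C, (fun n => Num.max (y n) (u n)); split=> //.
split; first exact: frame_compatible_max.
by apply/funext => n; rewrite maxr_pMr.
Qed.

Lemma Xplus_iseq : Xplus I iseq.
Proof. exact/Xplus_frame_compatible/frame_compatible_iseq. Qed.

Lemma XR_Xplus x : Xplus I x -> XR I x.
Proof.
move=> hx; exists x, (fun n => 0 * x n); split=> //.
split; first exact: Xplus_scale hx.
by apply/funext => n; rewrite mul0r subr0.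
Qed.

Lemma XR_iseq : XR I iseq.
Proof. exact/XR_Xplus/Xplus_iseq. Qed.

Lemma XR_add x z : XR I x -> XR I z -> XR I (fun n => x n + z n).
Proof.
move=> [a [b [ha [hb ->]]]] [c [d [hc [hd ->]]]].
exists (fun n => a n + c n), (fun n => b n + d n).
do 2?split; try exact: Xplus_add.
by apply/funext => n; ring.
Qed.

Lemma XR_scale x k : XR I x -> XR I (fun n => k * x n).
Proof.
move=> [a [b [ha [hb ->]]]]; have [k0|k0] := leP 0 k.
  exists (fun n => k * a n), (fun n => k * b n).
  do 2?split; try exact: Xplus_scale.
  by apply/funext => n; ring.
exists (fun n => - k * b n), (fun n => - k * a n).
do 2?split; try (apply: Xplus_scale => //; lra).
by apply/funext => n; ring.
Qed.

Lemma XR_sub x z : XR I x -> XR I z -> XR I (fun n => x n - z n).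
Proof.
move=> hx hz; rewrite (_ : (fun _ => _) = (fun n => x n + -1 * z n)).
  exact/XR_add/XR_scale.
by apply/funext => n; rewrite mulN1r.
Qed.

Lemma XR_norm x : XR I x -> XR I (fun n => `|x n|).
Proof.
move=> [a [b [ha [hb ->]]]].
exists (fun n => 2 * Num.max (a n) (b n)), (fun n => a n + b n).
do 2?split; [exact/Xplus_scale/Xplus_max | exact: Xplus_add |].
apply/funext => n; case: (leP (a n) (b n)) => ?.
  by rewrite ler0_norm ?subr_le0 //; lra.
by rewrite gtr0_norm ?subr_gt0 //; lra.
Qed.

Lemma Xplus_bound x :
  Xplus I x -> exists2 B, 0 <= B & forall n, 0 <= x n <= B * card_I n.
Proof.
move=> [c [y [c0 [hy ->]]]]; exists c => // n.
have /andP[? ?] := frame_compatible_bound hy n.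
by rewrite mulr_ge0 //= ler_wpM2l.
Qed.

Lemma XR_bound x : XR I x -> exists2 B, 0 <= B & forall n, `|x n| <= B * card_I n.
Proof.
move=> [a [b [ha [hb ->]]]].
have [B1 B10 h1] := Xplus_bound ha; have [B2 B20 h2] := Xplus_bound hb.
exists (B1 + B2) => [|n]; first exact: addr_ge0.
have /andP[? ?] := h1 n; have /andP[? ?] := h2 n; rewrite mulrDl.
 apply: le_trans (ler_normB _ _) _.
by rewrite !ger0_norm // lerD.
Qed.

Lemma XR_ratio_bound x : XR I x -> exists B, forall n, `|x n / card_I n| <= B.
Proof.
move=> /XR_bound[B B0 xB]; exists B => n; rewrite normrM normfV.
have [->|cn_neq0] := eqVneq (card_I n) 0; first by rewrite normr0 invr0 mulr0.
by rewrite (ger0_norm (card_I_ge0 n)) ler_pdivrMr // lt_def cn_neq0 card_I_ge0.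
Qed.

Lemma XR_sum (A : eqType) (s : seq A) (F : A -> nat -> R) :
  (forall a, a \in s -> XR I (F a)) -> XR I (fun n => \sum_(a <- s) F a n).
Proof.
elim: s => [|a s IH] Fs.
  rewrite (_ : (fun _ => _) = (fun n => 0 * iseq n)); first exact/XR_scale/XR_iseq.
  by apply/funext => n; rewrite big_nil mul0r.
rewrite (_ : (fun _ => _) = (fun n => F a n + \sum_(b <- s) F b n)); last first.
  by apply/funext => n; rewrite big_cons.
apply: XR_add; first by apply: Fs; rewrite mem_head.
by apply: IH => b bs; apply: Fs; rewrite in_cons bs orbT.
Qed.

End FrameCompatible.

Section LimnEinf.
Variable R : realType.
Implicit Types (u : nat -> R) (r : R).
Local Open Scope ereal_scope.

Lemma limn_einf_ge0 u : (forall n, 0 <= u n)%R -> 0 <= limn_einf (EFin \o u).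
Proof.
move=> u0; rewrite limn_einf_lim; apply: lime_ge; first exact: is_cvg_einfs.
by apply: nearW => n; apply: le_ereal_inf_tmp => _ [k _ <-]; rewrite lee_fin.
Qed.

Lemma limn_einf_le_frequently u r :
  (forall N, exists2 k, (N <= k)%N & (u k <= r)%R) -> limn_einf (EFin \o u) <= r%:E.
Proof.
move=> ur; rewrite limn_einf_lim; apply: lime_le; first exact: is_cvg_einfs.
apply: nearW => N; have [k Nk ukr] := ur N.
by apply: ge_ereal_inf; exists (u k)%:E; [exists k | rewrite lee_fin].
Qed.

End LimnEinf.

Section SequenceMeasureFunction.
Variables (R : realType) (T : choiceType) (I : nat -> {fset T}).
Hypothesis Inest : forall n, (I n `<=` I n.+1)%fset.
Variables (W : topologicalType) (m : (nat -> R) -> W -> R).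
Hypothesis hm : sequence_measure_function I m.
Implicit Types (x y u v : nat -> R).

Lemma m_lin x y a b w : XR I x -> XR I y ->
  m (fun n => a * x n + b * y n) w = a * m x w + b * m y w.
Proof. by have [_ [hlin _]] := hm; move=> hx hy; rewrite hlin. Qed.

Lemma m_add x y w : XR I x -> XR I y -> m (fun n => x n + y n) w = m x w + m y w.
Proof.
move=> hx hy; rewrite (_ : (fun n => _) = (fun n => 1 * x n + 1 * y n)).
  by rewrite m_lin // !mul1r.
by apply/funext => n; rewrite !mul1r.
Qed.

Lemma m_scale x a w : XR I x -> m (fun n => a * x n) w = a * m x w.
Proof.
move=> hx; rewrite (_ : (fun n => _) = (fun n => a * x n + 0 * x n)).
  by rewrite m_lin // mul0r addr0.
by apply/funext => n; rewrite mul0r addr0.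
Qed.

Lemma m_sub x y w : XR I x -> XR I y -> m (fun n => x n - y n) w = m x w - m y w.
Proof.
move=> hx hy; rewrite (_ : (fun n => _) = (fun n => 1 * x n + -1 * y n)).
  by rewrite m_lin // mul1r mulN1r.
by apply/funext => n; rewrite mul1r mulN1r.
Qed.

Lemma m_iseq_scale a w : m (fun n => a * iseq R I n) w = a.
Proof.
have [_ [_ [_ [_ m_iseq]]]] := hm.
by rewrite m_scale ?m_iseq ?mulr1 //; exact: XR_iseq.
Qed.

(* The order axiom, stated for X^+, extends to X^R by moving the negative parts across. *)
Lemma m_le_seq_le u v : XR I u -> XR I v ->
  (forall w, m u w <= m v w) <-> seq_le I u v.
Proof.
move=> hu hv; have [a1 [b1 [ha1 [hb1 eu]]]] := hu; have [a2 [b2 [ha2 [hb2 ev]]]] := hv.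
have -> : seq_le I u v = seq_le I (fun n => a1 n + b2 n) (fun n => a2 n + b1 n).
  by rewrite /seq_le eu ev; congr (_ <= limn_einf _)%E; apply/funext => n; congr (_%:E); ring.
have [_ [_ [_ [m_le _]]]] := hm.
rewrite -(m_le _ _ (Xplus_add ha1 hb2) (Xplus_add ha2 hb1)).
split=> le_uv w; have := le_uv w; rewrite eu ev !m_sub ?m_add //; do ?exact: XR_Xplus; lra.
Qed.

Lemma m_mono u v : XR I u -> XR I v -> (forall n, u n <= v n) ->
  forall w, m u w <= m v w.
Proof.
move=> hu hv uv; apply/m_le_seq_le => //; apply: limn_einf_ge0 => n.
by rewrite divr_ge0 ?subr_ge0 ?card_I_ge0.
Qed.

Lemma m_norm u w : XR I u -> `|m u w| <= m (fun n => `|u n|) w.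
Proof.
move=> hu; have hnu := XR_norm hu; rewrite ler_norml; apply/andP; split.
  rewrite lerNl -(mulN1r (m u w)) -m_scale //.
  by apply: m_mono (XR_scale _ hu) hnu _ w => n; rewrite mulN1r -normrN ler_norm.
exact: m_mono hu hnu (fun n => ler_norm (u n)) w.
Qed.

End SequenceMeasureFunction.

Lemma ultra_bounded_cvg (R : realType) (U : Type) (F : set_system U)
    (FU : UltraFilter F) (y : U -> R) (B : R) :
  (forall t, `|y t| <= B) -> cvg (y @ F).
Proof.
move=> yB; have FP : ProperFilter F := @ultra_proper _ _ FU.
have FF : Filter F := FP.
have yF : ProperFilter (y @ F) by exact: fmap_proper_filter.
have yFB : F (y @^-1` `[- B, B]%classic).
  by apply: filterS filterT => t _; rewrite /= in_itv /= -ler_norml yB.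
have [c [_ c_cluster]] := segment_compact yF yFB.
apply/cvg_ex; exists c; apply/cvgrPdist_lt => e e0.
have [//|F_far] := in_ultra_setVsetC [set t | `|c - y t| < e] FU.
have [r [/= r_far r_near]] :=
  c_cluster [set r | ~ `|c - r| < e] _ F_far (nbhsx_ballx c e e0).
by case: r_far.
Qed.

Section FreeUltrafilter.
Variable p : set_system nat.
Hypothesis hp : free_ultrafilter p.

Lemma free_ultrafilter_proper : ProperFilter p.
Proof. exact: (@ultra_proper _ _ hp.1). Qed.

Lemma free_ultrafilter_ge N : p [set n | (N <= n)%N].
Proof.
have pF := free_ultrafilter_proper.
elim: N => [|N IH]; first by apply: filterS filterT.
have [A [pA nAN]] := hp.2 N.
apply: filterS (filterI IH pA) => n /= [Nn An].
by rewrite ltn_neqAle Nn andbT; apply/eqP => eNn; apply: nAN; rewrite eNn.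
Qed.

Lemma free_ultrafilter_frequently (A : set nat) : p A ->
  forall N, exists2 k, (N <= k)%N & A k.
Proof.
have pF := free_ultrafilter_proper.
move=> pA N; have [k [Nk Ak]] := filter_ex (filterI (free_ultrafilter_ge N) pA).
by exists k.
Qed.

End FreeUltrafilter.

Lemma plimP (R : realType) (p : set_system nat) {pF : Filter p} (y : nat -> R) c :
  plim p y c <-> y @ p --> c.
Proof.
rewrite cvgrPdist_lt; split=> yc e /yc; apply: filterS => n /=; by rewrite distrC.
Qed.

Lemma cvg_sum_seq0 (R : realType) (A : eqType) (U : Type) (F : set_system U)
    (FF : Filter F) (s : seq A) (f : A -> U -> R) :
  (forall a, a \in s -> f a @ F --> 0) -> (fun t => \sum_(a <- s) f a t) @ F --> 0.
Proof.
elim: s => [|a s IH] fs.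
  by under eq_fun do rewrite big_nil; exact: cvg_cst.
have fs' b : b \in s -> f b @ F --> 0 by move=> bs; apply: fs; rewrite in_cons bs orbT.
under eq_fun do rewrite big_cons.
by have := cvgD (fs a (mem_head a s)) (IH fs'); rewrite addr0; apply.
Qed.

Lemma compact_finI_bigcap (X : topologicalType) (A : choiceType) (D : set A)
    (f : A -> set X) :
  compact [set: X] -> (forall a, D a -> closed (f a)) -> finI D f ->
  \bigcap_(a in D) f a !=set0.
Proof.
move=> Xcpt fcl fin; pose F := filter_from (finI_from D f) id.
have FF : ProperFilter F := finI_filter fin.
have [x [_ x_cluster]] := Xcpt F FF filterT.
exists x => a Da; have -> : f a = closure (f a) by apply/closure_id/fcl.
move=> B xB; apply: x_cluster xB; exists (f a) => //; exact: finI_from1.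
Qed.

Section UltrafilterPoint.
Variables (R : realType) (T : choiceType) (t0 : T) (I : nat -> {fset T}).
Hypothesis Inest : forall n, (I n `<=` I n.+1)%fset.
Hypothesis Icover : forall t : T, exists n, t \in I n.
Variables (W : topologicalType) (m : (nat -> R) -> W -> R).
Hypothesis Wcpt : compact [set: W].
Hypothesis hm : sequence_measure_function I m.
Variable p : set_system nat.
Hypothesis hp : free_ultrafilter p.
Implicit Types (x : nat -> R).

Local Notation card_I := (card_I R I).
Local Notation iseq := (iseq R I).
Local Notation ratio x := (fun n => x n / card_I n).

#[local] Instance free_ultrafilter_ProperFilter : ProperFilter p := free_ultrafilter_proper hp.

Lemma card_I_gt0_ultra : p [set n | 0 < card_I n].
Proof.
have [n0 t0_In0] := Icover t0.
have I_mono := homo_leq (@fsubset_refl _) (@fsubset_trans _) Inest.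
apply: filterS (free_ultrafilter_ge hp n0) => n /= /I_mono/fsubsetP/(_ t0 t0_In0) t0_In.
by rewrite ltr0n cardfs_gt0; apply/fset0Pn; exists t0.
Qed.

Let c x := lim (ratio x @ p).

Lemma ratio_cvg x : XR I x -> ratio x @ p --> c x.
Proof. by move=> /(XR_ratio_bound Inest)[B xB]; have := ultra_bounded_cvg hp.1 xB. Qed.

Lemma exists_m_lt x l d : XR I x -> ratio x @ p --> l -> l < d ->
  exists w, m x w < d.
Proof.
move=> hx xl ld; apply: contrapT => /forallNP m_ge; pose e := (d - l) / 2.
have e_gt0 : 0 < e by rewrite divr_gt0 ?subr_gt0.
have : seq_le I (fun n => d * iseq n) x.
  apply/(m_le_seq_le hm (XR_scale d (XR_iseq R Inest)) hx) => w.
  by rewrite (m_iseq_scale Inest hm) leNgt; apply/negP/m_ge.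
have far : p [set n | (x n - d * iseq n) / card_I n <= - e].
  apply: filterS (filterI card_I_gt0_ultra ((cvgrPdist_lt _ _).1 xl e e_gt0)).
  move=> n /= [cn_gt0]; rewrite ltr_distlC => /andP[_ xn_lt].
  rewrite mulrBl /iseq -mulrA divff ?gt_eqF // mulr1 /e.
  rewrite /e in xn_lt; lra.
rewrite /seq_le leNgt => /negP; apply; apply: le_lt_trans (_ : (- e)%:E < 0)%E.
  exact/limn_einf_le_frequently/(free_ultrafilter_frequently hp far).
by rewrite lte_fin oppr_lt0.
Qed.

Let dev x n := `|x n - c x * iseq n|.

Lemma XR_dev x : XR I x -> XR I (dev x).
Proof. by move=> hx; exact/XR_norm/(XR_sub hx)/XR_scale/(XR_iseq R Inest). Qed.

Lemma ratio_dev_cvg0 x : XR I x -> ratio (dev x) @ p --> 0.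
Proof.
move=> hx; have dev_lim : (fun n => `|x n / card_I n - c x|) @ p --> `|c x - c x|.
  by apply: cvg_norm; apply: cvgB (ratio_cvg hx) (cvg_cst _).
rewrite subrr normr0 in dev_lim; apply: (cvg_trans _ dev_lim); apply: near_eq_cvg.
apply: filterS card_I_gt0_ultra => n /= cn_gt0.
have -> : x n / card_I n - c x = (x n - c x * card_I n) / card_I n.
  by rewrite mulrBl -mulrA divff ?gt_eqF ?mulr1.
by rewrite normrM normfV (gtr0_norm cn_gt0).
Qed.

Lemma dev_le_sum (s : seq (nat -> R)) x n :
  x \in s -> dev x n <= \sum_(y <- s) dev y n.
Proof.
move=> xs; rewrite (big_rem x xs) /= lerDl.
by apply: sumr_ge0 => y _; exact: normr_ge0.
Qed.

Lemma norm_m_sub_le_dev x w : XR I x -> `|m x w - c x| <= m (dev x) w.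
Proof.
move=> hx; have hi := XR_scale (c x) (XR_iseq R Inest).
rewrite -[X in m x w - X](m_iseq_scale Inest hm (c x) w) -(m_sub hm) //.
exact/(m_norm hm)/XR_sub.
Qed.

Lemma exists_common_point (s : seq (nat -> R)) :
  (forall x, x \in s -> XR I x) -> exists w, forall x, x \in s -> m x w = c x.
Proof.
move=> sXR; pose g n := \sum_(x <- s) dev x n.
have hg : XR I g by apply: (XR_sum Inest) => x /sXR /XR_dev.
have g_lim : ratio g @ p --> 0.
  under eq_fun do rewrite /g mulr_suml.
  by apply: cvg_sum_seq0 => x /sXR; exact: ratio_dev_cvg0.
have m_g_ge0 w : 0 <= m g w.
  rewrite -(m_iseq_scale Inest hm 0 w).
  apply: (m_mono hm (XR_scale 0 (XR_iseq R Inest)) hg) => n.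
  by rewrite mul0r; apply: sumr_ge0 => y _; exact: normr_ge0.
have [w0 _] := exists_m_lt hg g_lim ltr01.
have m_g_cont : continuous (m g) := proj1 hm g hg.
have [w _ w_min] :=
  compact_EVT_min (ex_intro _ w0 Logic.I) Wcpt (continuous_subspaceT m_g_cont).
have m_g_w : m g w = 0.
  apply/le_anti; rewrite m_g_ge0 andbT; apply/ler_addgt0Pr => e e_gt0.
  have [w' m_g_w'] := exists_m_lt hg g_lim e_gt0.
  by rewrite add0r; apply: le_trans (ltW m_g_w'); apply: w_min; rewrite inE.
exists w => x xs; have hx := sXR x xs.
apply/eqP; rewrite -subr_eq0 -normr_le0 -m_g_w.
apply: le_trans (norm_m_sub_le_dev w hx) _.
by apply: (m_mono hm (XR_dev hx) hg) => n; exact: dev_le_sum.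
Qed.

End UltrafilterPoint.

Theorem theorem5p22 (R : realType) (T : choiceType) (t0 : T)
  (I : nat -> {fset T})
  (Inest : forall n, (I n `<=` I n.+1)%fset)
  (Icover : forall t : T, exists n, t \in I n)
  (W : topologicalType) (Wcpt : compact [set: W]) (Whaus : hausdorff_space W)
  (m : (nat -> R) -> W -> R) (hm : sequence_measure_function I m)
  (p : set_system nat) (hp : free_ultrafilter p) :
  exists wp : W, forall x : nat -> R, XR (R:=R) I x ->
    plim p (fun n => x n / card_I R I n) (m x wp).
Proof.
have pF := free_ultrafilter_proper hp.
pose c x := lim ((fun n => x n / card_I R I n) @ p).
have [w wc] : \bigcap_(x in XR I) (m x @^-1` [set c x]) !=set0.
  apply: (compact_finI_bigcap Wcpt) => [x hx|D D_XR].
    have m_x_cont : continuous (m x) := proj1 hm x hx.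
    by move: ((continuous_closedP (m x)).1 m_x_cont [set c x]); apply; exact: closed_eq.
  have [|w wD] := exists_common_point t0 Inest Icover Wcpt hm hp (s := D).
    by move=> x /D_XR; rewrite inE.
  by exists w => x /wD.
exists w => x hx; apply/plimP; rewrite (wc x hx).
by have := ratio_cvg Inest hp hx.
Qed.
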